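(* Let $a<b<c$ be integers, so that the infinite arc $(-\infty,b)$ crosses the finite arc $(a,c)$. Then there are non-split short exact sequences in $\mathcal{C}_2$ \[ 0\to(-\infty,b)\xrightarrow{f}(a,b)\oplus(-\infty,c)\xrightarrow{g}(a,c)\to0,\qquad 0\to(a,c)\xrightarrow{f'}(b,c)\oplus(-\infty,a)\xrightarrow{g'}(-\infty,b)\to0. \]
   Context: Let $R=\mathbb{C}[x,y]/(x^2)$, graded with $\deg x=1$, $\deg y=-1$; $M(j)_n=M_{j+n}$. $\mathcal{C}_2$ is the exact category of finitely generated $\mathbb{Z}$-graded maximal Cohen–Macaulay $R$-modules with degree-preserving morphisms. An arc is a pair $(a,b)$ with $a\in\mathbb{Z}\cup\{-\infty\}$, $b\in\mathbb{Z}$, $a<b$; a finite arc $(a,b)$ ($a\in\mathbb{Z}$) denotes the module $(x,y^{b-a-1})(1-b)$ (where $(x,y^0)=R$), and an infinite arc $(-\infty,b)$ denotes $\mathbb{C}[y](-b)=(R/(x))(-b)$. *)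

From mathcomp Require Import all_boot all_algebra.
From mathcomp Require Import complex.
From mathcomp Require Import Rstruct.
Unset Printing Implicit Defensive.
Import GRing.Theory.
Local Open Scope ring_scope.

Definition CC : fieldType := (Rdefinitions.R)[i].

(* Z-graded modules over  R = K[x,y]/(x^2),  deg x = 1, deg y = -1.          *)
Unset Implicit Arguments.
Record grmod (K : fieldType) := GrMod {
  gcomp :> int -> lmodType K;
  gX : forall n : int, gcomp n -> gcomp (n + 1);
  gY : forall n : int, gcomp (n + 1) -> gcomp n;
  gX_lin : forall n (c : K) u v, gX n (c *: u + v) = c *: gX n u + gX n v;
  gY_lin : forall n (c : K) u v, gY n (c *: u + v) = c *: gY n u + gY n v;
  gXX : forall n (v : gcomp n), gX (n + 1) (gX n v) = 0;
  gXY : forall n (v : gcomp (n + 1)), gX n (gY n v) = gY (n + 1) (gX (n + 1) v)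
}.

Arguments gcomp {K}.
Arguments gX {K} g {n} _.
Arguments gY {K} g {n} _.

Unset Implicit Arguments.
Record grhom (K : fieldType) (M N : grmod K) := GrHom {
  hmap :> forall n : int, M n -> N n;
  hmap_lin : forall n (c : K) u v, hmap n (c *: u + v) = c *: hmap n u + hmap n v;
  hmap_X : forall n (v : M n), hmap (n + 1) (gX M v) = gX N (hmap n v);
  hmap_Y : forall n (v : M (n + 1)), hmap n (gY M v) = gY N (hmap (n + 1) v)
}.

Arguments hmap {K M N} g n _.

Definition short_exact (K : fieldType) (A B C : grmod K)
  (f : grhom K A B) (g : grhom K B C) : Prop :=
  forall n : int,
    injective (f n) /\
    (forall w : C n, exists v : B n, g n v = w) /\
    (forall v : B n, g n v = 0 <-> exists u : A n, f n u = v).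

Definition ses_split (K : fieldType) (A B C : grmod K)
  (f : grhom K A B) (g : grhom K B C) : Prop :=
  exists s : grhom K C B, forall n (w : C n), g n (s n w) = w.

Section DSum.
Variables (K : fieldType) (M N : grmod K).
Definition ds_X n (p : (gcomp M n * gcomp N n)%type) : (gcomp M (n + 1) * gcomp N (n + 1))%type :=
  (gX M p.1, gX N p.2).
Definition ds_Y n (p : (gcomp M (n + 1) * gcomp N (n + 1))%type) : (gcomp M n * gcomp N n)%type :=
  (gY M p.1, gY N p.2).
Lemma ds_X_lin n (c : K) u v : ds_X n (c *: u + v) = c *: ds_X n u + ds_X n v.
Proof. by case: u v => [u1 u2] [v1 v2]; rewrite /ds_X /= !gX_lin. Qed.
Lemma ds_Y_lin n (c : K) u v : ds_Y n (c *: u + v) = c *: ds_Y n u + ds_Y n v.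
Proof. by case: u v => [u1 u2] [v1 v2]; rewrite /ds_Y /= !gY_lin. Qed.
Lemma ds_XX n v : ds_X (n + 1) (ds_X n v) = 0.
Proof. by case: v => [v1 v2]; rewrite /ds_X /= !gXX. Qed.
Lemma ds_XY n v : ds_X n (ds_Y n v) = ds_Y (n + 1) (ds_X (n + 1) v).
Proof. by case: v => [v1 v2]; rewrite /ds_X /ds_Y /= !gXY. Qed.
Definition dsum : grmod K :=
  @GrMod K (fun n => (gcomp M n * gcomp N n)%type) ds_X ds_Y ds_X_lin ds_Y_lin ds_XX ds_XY.
End DSum.

(* Monomial graded modules.  In degree n the module has a basis consisting   *)
(* of at most one "y-monomial" (present iff P0 n) and at most one            *)
(* "x-monomial" (present iff P1 n); the degree-n piece is                   *)
(*   K^(P0 n) * K^(P1 n)   (row vectors of length 0 or 1).                   *)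
(* x sends the y-monomial of degree n to the x-monomial of degree n+1 and     *)
(* kills x-monomials; y sends each monomial of degree n+1 to the monomial of *)
(* the same kind in degree n.  (All-ones matrices of size 0 or 1 encode      *)
(* these identity/zero maps.)                                                *)
Section Monomial.
Variables (K : fieldType) (P0 P1 : int -> bool).
Hypothesis compat : forall n : int,
  P0 (n + 1) -> P1 (n + 1) -> P0 n = P1 (n + 1 + 1).
Definition mn_comp (n : int) : lmodType K := ('rV[K]_(P0 n) * 'rV[K]_(P1 n))%type.
Definition mn_X n (p : mn_comp n) : mn_comp (n + 1) :=
  (0, p.1 *m const_mx 1).
Definition mn_Y n (p : mn_comp (n + 1)) : mn_comp n :=
  (p.1 *m const_mx 1, p.2 *m const_mx 1).
Lemma mn_X_lin n (c : K) u v : mn_X n (c *: u + v) = c *: mn_X n u + mn_X n v.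
Proof.
case: u v => [u1 u2] [v1 v2]; rewrite /mn_X /=.
congr pair => /=; rewrite ?scaler0 ?addr0 //.
by rewrite (mulmxDl (c *: u1)) scalemxAl.
Qed.
Lemma mn_Y_lin n (c : K) u v : mn_Y n (c *: u + v) = c *: mn_Y n u + mn_Y n v.
Proof.
case: u v => [u1 u2] [v1 v2]; rewrite /mn_Y /=.
congr pair => /=.
  by rewrite (mulmxDl (c *: u1)) scalemxAl.
by rewrite (mulmxDl (c *: u2)) scalemxAl.
Qed.
Lemma mn_XX n v : mn_X (n + 1) (mn_X n v) = 0.
Proof. by rewrite /mn_X /= mul0mx. Qed.
Lemma mn_XY n v : mn_X n (mn_Y n v) = mn_Y (n + 1) (mn_X (n + 1) v).
Proof.
case: v => [v1 v2]; rewrite /mn_X /mn_Y /= mul0mx; congr pair.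
rewrite -!mulmxA; congr (_ *m _).
apply/matrixP => i j; rewrite !mxE.
have h0 : P0 (n + 1) by move: (leq_ltn_trans (leq0n _) (ltn_ord i)); rewrite lt0b.
have h1 : P1 (n + 1) by move: (leq_ltn_trans (leq0n _) (ltn_ord j)); rewrite lt0b.
under eq_bigr do rewrite !mxE mulr1.
under [in RHS]eq_bigr do rewrite !mxE mulr1.
by rewrite !sumr_const !card_ord (compat n h0 h1).
Qed.
Definition monomod : grmod K :=
  @GrMod K mn_comp mn_X mn_Y mn_X_lin mn_Y_lin mn_XX mn_XY.
End Monomial.

(* Finite arc (a,b):  (x, y^(b-a-1))(1-b).  Its degree-n piece is the degree *)
(* (n+1-b) piece of the ideal I = (x, y^k), k = b-a-1 (with (x,y^0) = R).     *)
(* I has K-basis { y^i : i >= k } u { x y^i : i >= 0 };  deg y^i = -i and     *)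
(* deg x y^i = 1-i.  Hence in degree n of the twist:                          *)
(*   y-monomial y^(b-1-n) present  iff  b-1-n >= 0 and b-1-n >= k             *)
(*                                 iff  n < b and n <= a;                     *)
(*   x-monomial x y^(b-n) present  iff  b-n >= 0  iff  n <= b.                *)
(* Infinite arc (-oo,b):  C[y](-b) = (R/(x))(-b); degree-n piece spanned by   *)
(* y^(b-n) (present iff n <= b), with x acting by 0 (no x-monomials).        *)
From mathcomp Require Import zify.

Definition fin_P0 (a b : int) (n : int) : bool := (n <= a) && (n < b).
Definition fin_P1 (b : int) (n : int) : bool := n <= b.

Lemma fin_compat (a b : int) : forall n : int,
  fin_P0 a b (n + 1) -> fin_P1 b (n + 1) -> fin_P0 a b n = fin_P1 b (n + 1 + 1).
Proof.
move=> n; rewrite /fin_P0 /fin_P1 => /andP[h1 h2] _.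
have -> : (n <= a) = true by apply/idP; lia.
have -> : (n < b) = true by apply/idP; lia.
rewrite /=; apply/esym; apply/idP; lia.
Qed.

Definition inf_P0 (b : int) (n : int) : bool := n <= b.
Definition inf_P1 (n : int) : bool := false.

Lemma inf_compat (b : int) : forall n : int,
  inf_P0 b (n + 1) -> inf_P1 (n + 1) -> inf_P0 b n = inf_P1 (n + 1 + 1).
Proof. by []. Qed.

Definition arc_fin (K : fieldType) (a b : int) : grmod K :=
  monomod K (fin_P0 a b) (fin_P1 b) (fin_compat a b).

Definition arc_inf (K : fieldType) (b : int) : grmod K :=
  monomod K (inf_P0 b) inf_P1 (inf_compat b).

From mathcomp Require Import all_boot all_algebra zify.
Import GRing.Theory.
Local Open Scope ring_scope.

(* In each degree an arc module has at most two basis monomials, and the maps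
   of both sequences send monomials to monomials up to sign, so exactness is a
   degreewise computation with row vectors of length 0 or 1.
   Neither sequence splits because of the action of x.  In the first one, a
   section s must kill the x-line x C[y] of (a,c) in its (a,b)-component:
   every element of that line is y^k times an element of higher degree, for
   all k up to degree c, while (a,b) vanishes above degree b < c.  Applied to
   x e, with e the y-monomial of (a,c) in degree a, this shows that the
   (a,b)-component of s e has no y-monomial, although g (s e) = e needs one.
   In the second one, x kills the generator e of (-oo,b) in degree b, hence
   also s e; but in degree b the summand (-oo,a) is zero and x is injective on
   the y-monomial of (b,c), so s e = 0. *)

Section OnesMatrices.
Context {K : fieldType}.
Local Notation ones := (const_mx (1 : K)).

Lemma rV_nil0 {k : bool} (p : 'rV[K]_k) : ~~ k -> p = 0.
Proof. by case: k p => // p _; exact: thinmx0. Qed.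

Lemma rV_nil_eq {k : bool} (p q : 'rV[K]_k) : ~~ k -> p = q.
Proof. by move=> k0; rewrite (rV_nil0 p k0) (rV_nil0 q k0). Qed.

Lemma mulmx_ones_ones {m k l : bool} (p : 'rV[K]_m) : (m -> l -> k) ->
  p *m (ones : 'M_(m, k)) *m (ones : 'M_(k, l)) = p *m ones.
Proof.
case: m p => [p|p _]; last by rewrite (rV_nil0 p) ?mul0mx.
case: l => [/(_ isT isT) ->|_]; last by apply: rV_nil_eq.
rewrite -mulmxA; congr (_ *m _).
by apply/matrixP => i j; rewrite !mxE big_ord1 !mxE mulr1.
Qed.

Lemma mulmx_ones_id {k : bool} (p : 'rV[K]_k) : p *m (ones : 'M_k) = p.
Proof.
case: k p => [p|p]; last by apply: rV_nil_eq.
by rewrite (_ : ones = 1%:M) ?mulmx1 //; apply/matrixP => i j; rewrite !mxE !ord1.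
Qed.

Lemma mulmx_onesK {m k : bool} (p : 'rV[K]_m) : (m -> k) ->
  p *m (ones : 'M_(m, k)) *m (ones : 'M_(k, m)) = p.
Proof. by move=> mk; rewrite mulmx_ones_ones ?mulmx_ones_id // => /mk. Qed.

Lemma mulmx_ones_inj {m k : bool} (p q : 'rV[K]_m) : (m -> k) ->
  p *m (ones : 'M_(m, k)) = q *m ones -> p = q.
Proof. by move=> mk E; rewrite -(mulmx_onesK p mk) -(mulmx_onesK q mk) E. Qed.

Lemma ones_neq0 {k : bool} : k -> (ones : 'rV[K]_k) != 0.
Proof.
by case: k => // _; apply/eqP => /matrixP/(_ ord0 ord0)/eqP; rewrite !mxE oner_eq0.
Qed.

End OnesMatrices.

Lemma additive_map0 (K : fieldType) (U V : lmodType K) (f : U -> V) :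
  (forall c u v, f (c *: u + v) = c *: f u + f v) -> f 0 = 0.
Proof.
move=> f_lin; have := f_lin 1 0 0; rewrite scale1r addr0 scale1r => f0_double.
by apply: (addrI (f 0)); rewrite addr0 -f0_double.
Qed.

Lemma int_ind_down (m : int) (P : int -> Prop) :
  (forall n, m < n -> P n) -> (forall n, P (n + 1) -> P n) -> forall n, P n.
Proof.
move=> Pbig Pstep n; case: (boolP (m < n)) => [/Pbig //|le_nm].
have Pdown (k : nat) : P (m + 1 - k%:Z).
  elim: k => [|k IHk]; first by apply: Pbig; lia.
  by apply: Pstep; have -> : m + 1 - k.+1%:Z + 1 = m + 1 - k%:Z by lia.
by have -> : n = m + 1 - Posz (absz (m + 1 - n)%R) by lia.
Qed.

Section GradedModules.
Context {K : fieldType}.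

Lemma grhom0 (M N : grmod K) (h : grhom K M N) n : h n 0 = 0.
Proof. exact: additive_map0 (hmap_lin K M N h n). Qed.

Lemma gY0 (M : grmod K) n : gY M (0 : M (n + 1)) = 0.
Proof. exact: additive_map0 (gY_lin K M n). Qed.

Lemma short_exact_intro (A B C : grmod K) (f : grhom K A B) (g : grhom K B C) :
  (forall n, injective (f n)) ->
  (forall n (w : C n), exists v, g n v = w) ->
  (forall n (u : A n), g n (f n u) = 0) ->
  (forall n (v : B n), g n v = 0 -> exists u, f n u = v) ->
  short_exact K A B C f g.
Proof.
move=> f_inj g_surj gf0 ker_g n; split=> //; split=> // v.
by split=> [/ker_g | [u <-]].
Qed.

End GradedModules.

Ltac arc_lia := rewrite /fin_P0 /fin_P1 /inf_P0 /inf_P1 /=; try done; move=> *; lia.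

Ltac empty_component :=
  match goal with |- @eq ?T _ _ =>
    first [ match T with context [nat_of_bool ?k] => apply: (@rV_nil_eq _ k) end
          | apply: (@rV_nil_eq _ false) ] end; arc_lia.

Section Arcs.
Context {K : fieldType}.
Local Notation ones := (const_mx (1 : K)).

Lemma arc_fin_vanish (a b n : int) : b < n -> forall v : arc_fin K a b n, v = 0.
Proof. by move=> bn [p q]; congr pair; empty_component. Qed.

Lemma arc_fin_xline_killed {N : grmod K} {a b c : int}
    (h : forall n, arc_fin K a c n -> N n) :
  b < c -> (forall n, b < n -> forall v : N n, v = 0) ->
  (forall n v, h n (gY _ v) = gY N (h (n + 1) v)) ->
  forall n (w : 'rV_(fin_P1 c n)), h n (0, w) = 0.
Proof.
move=> bc N_vanish hY; apply: (int_ind_down b) => [n /N_vanish N0 w|n IH w].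
  exact: N0.
case: (boolP (b < n)) => [/N_vanish N0|le_nb]; first exact: N0.
have -> : (0, w) = gY (arc_fin K a c) ((0, w *m ones) : arc_fin K a c (n + 1)).
  by rewrite /= /mn_Y /= mul0mx mulmx_onesK //; arc_lia.
by rewrite hY IH gY0.
Qed.

End Arcs.

Section SesFromInf.
Variables (K : fieldType) (a b c : int).
Hypotheses (hab : a < b) (hbc : b < c).
Local Notation ones := (const_mx (1 : K)).
Local Notation A := (arc_inf K b).
Local Notation B := (dsum K (arc_fin K a b) (arc_inf K c)).
Local Notation C := (arc_fin K a c).

Definition ses_inf_fmap n (v : A n) : B n := ((0, v.1 *m ones), (v.1 *m ones, 0)).

Lemma ses_inf_fmap_lin n (k : K) u v :
  ses_inf_fmap n (k *: u + v) = k *: ses_inf_fmap n u + ses_inf_fmap n v.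
Proof.
case: u v => [u1 u2] [v1 v2]; rewrite /ses_inf_fmap /= !mulmxDl -!scalemxAl.
by congr (_, _); congr (_, _) => /=; rewrite ?scaler0 ?addr0.
Qed.

Lemma ses_inf_fmap_X n v : ses_inf_fmap (n + 1) (gX A v) = gX B (ses_inf_fmap n v).
Proof.
case: v => [v1 v2]; rewrite /ses_inf_fmap /= /ds_X /= /mn_X /= !mul0mx.
by congr (_, (_, _)); empty_component.
Qed.

Lemma ses_inf_fmap_Y n v : ses_inf_fmap n (gY A v) = gY B (ses_inf_fmap (n + 1) v).
Proof.
by rewrite /ses_inf_fmap /= /ds_Y /= /mn_Y /= !mul0mx !mulmx_ones_ones //; arc_lia.
Qed.

Definition ses_inf_f : grhom K A B :=
  GrHom K A B ses_inf_fmap ses_inf_fmap_lin ses_inf_fmap_X ses_inf_fmap_Y.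

Definition ses_inf_gmap n (v : B n) : C n :=
  (v.1.1 *m ones, v.1.2 *m ones - v.2.1 *m ones).

Lemma ses_inf_gmap_lin n (k : K) u v :
  ses_inf_gmap n (k *: u + v) = k *: ses_inf_gmap n u + ses_inf_gmap n v.
Proof.
case: u v => [[u1 u2] [u3 u4]] [[v1 v2] [v3 v4]].
rewrite /ses_inf_gmap /= !mulmxDl -!scalemxAl; congr (_, _) => /=.
by rewrite scalerBr opprD addrACA.
Qed.

Lemma ses_inf_gmap_X n v : ses_inf_gmap (n + 1) (gX B v) = gX C (ses_inf_gmap n v).
Proof.
rewrite /ses_inf_gmap /= /ds_X /= /mn_X /= !mul0mx subr0.
by rewrite !mulmx_ones_ones //; arc_lia.
Qed.

Lemma ses_inf_gmap_Y n v : ses_inf_gmap n (gY B v) = gY C (ses_inf_gmap (n + 1) v).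
Proof.
by rewrite /ses_inf_gmap /= /ds_Y /= /mn_Y /= mulmxBl !mulmx_ones_ones //; arc_lia.
Qed.

Definition ses_inf_g : grhom K B C :=
  GrHom K B C ses_inf_gmap ses_inf_gmap_lin ses_inf_gmap_X ses_inf_gmap_Y.

Lemma ses_inf_exact : short_exact K A B C ses_inf_f ses_inf_g.
Proof.
apply: short_exact_intro => n.
- case=> [u1 u2] [v1 v2] /= [] u1_v1 _.
  by congr pair; [apply: mulmx_ones_inj u1_v1; arc_lia | empty_component].
- case=> w1 w2; exists ((w1 *m ones, 0), (- (w2 *m ones), 0)).
  by rewrite /= /ses_inf_gmap /= mul0mx sub0r mulNmx opprK !mulmx_onesK //; arc_lia.
- by move=> u; rewrite /= /ses_inf_gmap /= mul0mx !mulmx_ones_ones ?subrr //; arc_lia.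
case=> [[p q] [r z]]; rewrite /= /ses_inf_gmap /= => -[p0 /subr0_eq qr].
have {p0} -> : p = 0.
  by apply: (@mulmx_ones_inj _ _ (fin_P0 a c n)); rewrite ?p0 ?mul0mx //; arc_lia.
exists (q *m (ones : 'M_(fin_P1 b n, inf_P0 b n)), 0).
rewrite /ses_inf_fmap /= mulmx_onesK; last by arc_lia.
congr (_, _, (_, _)); last by empty_component.
apply: (@mulmx_ones_inj _ _ (fin_P1 c n)); first by arc_lia.
by rewrite !mulmx_ones_ones //; arc_lia.
Qed.

Lemma ses_inf_nonsplit : ~ ses_split K A B C ses_inf_f ses_inf_g.
Proof.
case=> s s_section.
pose h n (v : C n) : arc_fin K a b n := (s n v).1.
have h_xline0 : forall n w, h n (0, w) = 0.
  apply: (arc_fin_xline_killed h hbc (arc_fin_vanish a b)) => n v.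
  by rewrite /h hmap_Y.
pose e : C a := (ones, 0).
have xe : gX C e = (0, e.1 *m ones) by [].
have := h_xline0 (a + 1) (e.1 *m ones); rewrite -xe /h hmap_X.
have := s_section a e; case: (s a e) => [[p q] [r z]].
rewrite /= /ses_inf_gmap /mn_X /= => -[se_e _] /(congr1 snd) /= p0.
have {}p0 : p = 0.
  by apply: (@mulmx_ones_inj _ _ (fin_P1 b (a + 1))); rewrite ?p0 ?mul0mx //; arc_lia.
by move: se_e; rewrite p0 mul0mx => /esym/eqP; apply/negP/ones_neq0; arc_lia.
Qed.

End SesFromInf.

Section SesFromFin.
Variables (K : fieldType) (a b c : int).
Hypotheses (hab : a < b) (hbc : b < c).
Local Notation ones := (const_mx (1 : K)).
Local Notation A := (arc_fin K a c).
Local Notation B := (dsum K (arc_fin K b c) (arc_inf K a)).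
Local Notation C := (arc_inf K b).

Definition ses_fin_fmap n (v : A n) : B n :=
  ((v.1 *m ones, v.2 *m ones), (v.1 *m ones, 0)).

Lemma ses_fin_fmap_lin n (k : K) u v :
  ses_fin_fmap n (k *: u + v) = k *: ses_fin_fmap n u + ses_fin_fmap n v.
Proof.
case: u v => [u1 u2] [v1 v2]; rewrite /ses_fin_fmap /= !mulmxDl -!scalemxAl.
by congr (_, _, (_, _)) => /=; rewrite ?scaler0 ?addr0.
Qed.

Lemma ses_fin_fmap_X n v : ses_fin_fmap (n + 1) (gX A v) = gX B (ses_fin_fmap n v).
Proof.
case: v => [v1 v2]; rewrite /ses_fin_fmap /= /ds_X /= /mn_X /= !mul0mx.
by rewrite !mulmx_ones_ones; try arc_lia; congr (_, _, (_, _)); empty_component.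
Qed.

Lemma ses_fin_fmap_Y n v : ses_fin_fmap n (gY A v) = gY B (ses_fin_fmap (n + 1) v).
Proof.
case: v => [v1 v2]; rewrite /ses_fin_fmap /= /ds_Y /= /mn_Y /= !mul0mx.
by rewrite !mulmx_ones_ones //; arc_lia.
Qed.

Definition ses_fin_f : grhom K A B :=
  GrHom K A B ses_fin_fmap ses_fin_fmap_lin ses_fin_fmap_X ses_fin_fmap_Y.

Definition ses_fin_gmap n (v : B n) : C n := (v.1.1 *m ones - v.2.1 *m ones, 0).

Lemma ses_fin_gmap_lin n (k : K) u v :
  ses_fin_gmap n (k *: u + v) = k *: ses_fin_gmap n u + ses_fin_gmap n v.
Proof.
case: u v => [[u1 u2] [u3 u4]] [[v1 v2] [v3 v4]].
rewrite /ses_fin_gmap /= !mulmxDl -!scalemxAl; congr (_, _) => /=.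
  by rewrite scalerBr opprD addrACA.
by rewrite scaler0 addr0.
Qed.

Lemma ses_fin_gmap_X n v : ses_fin_gmap (n + 1) (gX B v) = gX C (ses_fin_gmap n v).
Proof.
case: v => [[v1 v2] [v3 v4]]; rewrite /ses_fin_gmap /= /ds_X /= /mn_X /= !mul0mx subr0.
by congr (_, _); empty_component.
Qed.

Lemma ses_fin_gmap_Y n v : ses_fin_gmap n (gY B v) = gY C (ses_fin_gmap (n + 1) v).
Proof.
case: v => [[v1 v2] [v3 v4]]; rewrite /ses_fin_gmap /= /ds_Y /= /mn_Y /= mulmxBl mul0mx.
by rewrite !mulmx_ones_ones //; arc_lia.
Qed.

Definition ses_fin_g : grhom K B C :=
  GrHom K B C ses_fin_gmap ses_fin_gmap_lin ses_fin_gmap_X ses_fin_gmap_Y.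

Lemma ses_fin_exact : short_exact K A B C ses_fin_f ses_fin_g.
Proof.
apply: short_exact_intro => n.
- case=> [u1 u2] [v1 v2] /= [] u1_v1 u2_v2 _.
  by congr pair; [apply: mulmx_ones_inj u1_v1 | apply: mulmx_ones_inj u2_v2]; arc_lia.
- case=> w1 w2; exists ((w1 *m ones, 0), (0, 0)).
  rewrite /= /ses_fin_gmap /= mul0mx subr0 mulmx_onesK; last by arc_lia.
  by congr pair; empty_component.
- by case=> u1 u2; rewrite /= /ses_fin_gmap /= !mulmx_ones_ones ?subrr //; arc_lia.
case=> [[p q] [r z]]; rewrite /= /ses_fin_gmap /= => -[/subr0_eq pr].
exists (r *m (ones : 'M_(inf_P0 a n, fin_P0 a c n)), q *m (ones : 'M_(fin_P1 c n))).
rewrite /ses_fin_fmap /= !mulmx_ones_id mulmx_onesK; last by arc_lia.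
congr (_, _, (_, _)); last by empty_component.
apply: (@mulmx_ones_inj _ _ (inf_P0 b n)); first by arc_lia.
by rewrite !mulmx_ones_ones -?pr //; arc_lia.
Qed.

Lemma ses_fin_nonsplit : ~ ses_split K A B C ses_fin_f ses_fin_g.
Proof.
case=> s s_section.
pose e : C b := (ones, 0).
have xe0 : gX C e = 0 by rewrite /= /mn_X /=; congr pair; empty_component.
have := hmap_X _ _ _ s b e; rewrite xe0 grhom0.
have := s_section b e; case: (s b e) => [[p q] [r z]].
rewrite /= /ses_fin_gmap /ds_X /mn_X /= => -[se_e] /(congr1 (fun v => v.1.2)) /= p0.
have {}p0 : p = 0.
  by apply: (@mulmx_ones_inj _ _ (fin_P1 c (b + 1))); rewrite ?p0 ?mul0mx //; arc_lia.
have r0 : r = 0 by apply: rV_nil0; arc_lia.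
by move: se_e; rewrite p0 r0 !mul0mx subr0 => /esym/eqP; apply/negP/ones_neq0; arc_lia.
Qed.

End SesFromFin.

Theorem lemma4p5 (a b c : int) (hab : a < b) (hbc : b < c) :
  (exists (f : grhom CC (arc_inf CC b) (dsum CC (arc_fin CC a b) (arc_inf CC c)))
          (g : grhom CC (dsum CC (arc_fin CC a b) (arc_inf CC c)) (arc_fin CC a c)),
      short_exact CC _ _ _ f g /\ ~ ses_split CC _ _ _ f g) /\
  (exists (f' : grhom CC (arc_fin CC a c) (dsum CC (arc_fin CC b c) (arc_inf CC a)))
          (g' : grhom CC (dsum CC (arc_fin CC b c) (arc_inf CC a)) (arc_inf CC b)),
      short_exact CC _ _ _ f' g' /\ ~ ses_split CC _ _ _ f' g').
Proof.
split.
- exists (ses_inf_f CC a b c hab hbc), (ses_inf_g CC a b c hab hbc).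
  by split; [apply: ses_inf_exact | apply: ses_inf_nonsplit].
- exists (ses_fin_f CC a b c hab hbc), (ses_fin_g CC a b c hab hbc).
  by split; [apply: ses_fin_exact | apply: ses_fin_nonsplit].
Qed.
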